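(* For each integer $k\ge 4$ and each integer $w\ge 4$, $m_2^{(2)}(k-1,w)$ equals the Griesmer upper bound for $m_2^{(2)}(k-1,w)$, i.e. the largest integer $n$ with $n\ge g_2^{(k-3)}(k,n-w)$.
   Context: For a prime power $q$ and $N\ge1$, a multiset of points in $\mathrm{PG}(N,q)$ is a map $\mathcal{K}$ from the points to $\mathbb{Z}_{\ge0}$, with $\mathcal{K}(S)=\sum_{P\in S}\mathcal{K}(P)$; its cardinality is $\mathcal{K}(\mathrm{PG}(N,q))$. Dimensions are projective. For $0\le r\le N-1$ and a positive integer $w$, $m_q^{(r)}(N,w)$ is the maximum cardinality of a multiset of points in $\mathrm{PG}(N,q)$ such that every $r$-dimensional subspace has multiplicity at most $w$. Let $v_j=(q^j-1)/(q-1)$ and, for $1\le s\le k$, $g_q^{(s)}(k,d)=d+\sum_{i=1}^{k-s}\lceil d/(q^iv_s)\rceil$. The Griesmer upper bound for $m_q^{(r)}(N,w)$ is the largest integer $n$ with $n\ge g_q^{(N-r)}(N+1,n-w)$. *)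

From mathcomp Require Import all_boot all_order all_algebra.
Set Implicit Arguments. Unset Strict Implicit. Unset Printing Implicit Defensive.
Import GRing.Theory.

(* Projective geometry PG(N,2): vector space F_2^(N+1), row vectors.
   Over F_2 each projective point has a unique nonzero representative,
   so points of PG(N,2) = nonzero vectors of 'rV['F_2]_(N.+1). *)
Notation vec2 N := 'rV['F_2]_(N.+1).

(* A multiset of points: a map from vectors to nat; its value at the zero
   vector is irrelevant (0 is not a point) and is never used. *)
Definition multiset2 (N : nat) := vec2 N -> nat.

Definition mult2 N (K : multiset2 N) (S : pred (vec2 N)) : nat :=
  \sum_(v : vec2 N | (v != 0%R) && S v) K v.

Definition card_ms2 N (K : multiset2 N) : nat := mult2 K predT.

(* The projective r-dimensional subspaces of PG(N,2) are the row spaces of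
   (r+1) x (N+1) matrices of rank r+1; its points are the nonzero vectors
   in the row space. *)
Definition in_sub N r (S : 'M['F_2]_(r.+1, N.+1)) : pred (vec2 N) :=
  fun v => (v <= S)%MS.

Definition feasible2 N r w (K : multiset2 N) : Prop :=
  forall S : 'M['F_2]_(r.+1, N.+1), \rank S = r.+1 -> mult2 K (in_sub S) <= w.

Definition is_largest (P : nat -> Prop) (n : nat) : Prop :=
  P n /\ forall m, P m -> m <= n.

Definition is_m2 N r w (n : nat) : Prop :=
  is_largest (fun m => exists K : multiset2 N, feasible2 r w K /\ card_ms2 K = m) n.

Definition vq (q j : nat) : nat := (q ^ j - 1) %/ (q - 1).

Definition ceildiv (a b : nat) : nat := (a + b - 1) %/ b.

Definition griesmer_g (q s k d : nat) : nat :=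
  d + \sum_(1 <= i < (k - s).+1) ceildiv d (q ^ i * vq q s).

(* We require w <= n so that d = n-w is a
   nonnegative integer; for n < w the condition holds trivially (g < 0 <= n),
   and n = w always satisfies it, so this does not change the largest n. *)
Definition griesmer_ok (q N r w n : nat) : Prop :=
  w <= n /\ griesmer_g q (N - r) N.+1 (n - w) <= n.

From mathcomp Require Import all_boot all_order all_algebra zify.
Import GRing.Theory.
Set Implicit Arguments. Unset Strict Implicit. Unset Printing Implicit Defensive.

(* Let K be a multiset of points of PG(N,2), N >= 3, of cardinality n in which
   every plane has multiplicity at most w, and let p <= l <= w be the largest
   multiplicities of a point and of a line. Double counting K over the points,
   over the lines through a heaviest point and over the planes through a
   heaviest line gives, with u = 2 v_(N-2) and d = n - w,
     d <= (w - l) u,   d <= (l - p) 2u,   d <= p 4u,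
   so that c + ceil(c/2) + ceil(c/4) <= w for c = ceil(d/u). This is exactly the
   Griesmer condition n >= g(n - w), whence n <= w + c_max u with c_max the
   largest such c. Conversely w + c_max u is attained by combining copies of the
   whole space, of the complement of a hyperplane, of the complement of a
   codimension-2 subspace and of a single point, which meet every plane in at
   most 7, 4, 6 and 1 points respectively. *)

Lemma pchar_F2 : 2 \in [pchar 'F_2]%R.
Proof. exact: pchar_Fp. Qed.

Lemma F2_cases (c : 'F_2) : c = 0%R \/ c = 1%R.
Proof. by case: c => [[|[|]] //] ?; [left|right]; apply: val_inj. Qed.

Lemma F2_neq0 (c : 'F_2) : (c != 0)%R = (c == 1)%R.
Proof. by case: c => [[|[|]] //]. Qed.

Lemma addrr_rV_F2 n (v : 'rV['F_2]_n) : (v + v = 0)%R.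
Proof. by apply/rowP => i; rewrite !mxE (addrr_pchar2 pchar_F2). Qed.

Definition F2_kernel (G : finType) (D : pred G) (phi : G -> 'F_2) : pred G :=
  [pred x | D x && (phi x == 0%R)].

Section F2Kernel.
Variables (G : finZmodType) (D : pred G) (phi : G -> 'F_2).
Hypothesis D_add : forall x y, D x -> D y -> D (x + y)%R.
Hypothesis phiD : {morph phi : x y / x + y}%R.

Lemma F2_kernel_add x y :
  F2_kernel D phi x -> F2_kernel D phi y -> F2_kernel D phi (x + y)%R.
Proof.
rewrite /F2_kernel /= phiD => /andP[Dx /eqP->] /andP[Dy /eqP->].
by rewrite D_add ?addr0.
Qed.

Lemma card_F2_fibres :
  #|D| = #|F2_kernel D phi| + #|[pred x | D x && (phi x == 1)%R]|.
Proof.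
rewrite -(cardID [pred x | phi x == 0%R] D).
by congr (_ + _); apply: eq_card => x; rewrite !inE ?F2_neq0 andbC.
Qed.

Lemma card_F2_fibre_shift a (c : 'F_2) : D a -> phi a = 1%R ->
  #|[pred x | D x && (phi x == c)]| <= #|[pred x | D x && (phi x == c + 1)%R]|.
Proof.
move=> Da pa; rewrite -(card_image (addIr a)); apply: subset_leq_card.
apply/subsetP => _ /imageP[x /andP[Dx /eqP px] ->].
by rewrite inE D_add //= phiD px pa.
Qed.

Lemma card_F2_kernel_ge : #|D| <= 2 * #|F2_kernel D phi|.
Proof.
rewrite card_F2_fibres mul2n -addnn leq_add2l.
case: (pickP [pred a | D a && (phi a == 1%R)]) => [a /andP[Da /eqP pa]|none].
  by have := card_F2_fibre_shift 1%R Da pa; rewrite (addrr_pchar2 pchar_F2).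
by rewrite (eq_card0 none).
Qed.

Lemma card_F2_kernel a : D a -> phi a = 1%R ->
  2 * #|F2_kernel D phi| = #|D|.
Proof.
move=> Da pa; apply/eqP; rewrite eqn_leq card_F2_kernel_ge andbT.
rewrite card_F2_fibres mul2n -addnn leq_add2l.
by have := card_F2_fibre_shift 0%R Da pa; rewrite add0r.
Qed.
End F2Kernel.

Definition in_rowspace N j (A : 'M['F_2]_(j, N.+1)) : pred (vec2 N) :=
  fun v => (v <= A)%MS.

Section Multiplicities.
Variable N : nat.

Lemma mult2D (f g : multiset2 N) S :
  mult2 (fun v => f v + g v) S = mult2 f S + mult2 g S.
Proof. exact: big_split. Qed.

Lemma mult2M c (f : multiset2 N) S : mult2 (fun v => c * f v) S = c * mult2 f S.
Proof. by rewrite /mult2 big_distrr. Qed.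

Lemma mult2_indicator (P S : pred (vec2 N)) : P 0%R = false ->
  mult2 (fun v => nat_of_bool (P v)) S = #|[pred v | S v && P v]|.
Proof.
move=> P0; rewrite /mult2 -sum1_card (bigID P) /= [X in _ + X]big1 ?addn0.
  apply: eq_big => [v|v /andP[_ ->]] //; rewrite !inE.
  by have [->|] := eqVneq v 0%R; rewrite ?P0 ?andbF.
by move=> v /andP[_ /negbTE ->].
Qed.

Lemma mult2_cst c (S : pred (vec2 N)) : S 0%R -> mult2 (fun=> c) S = c * (#|S| - 1).
Proof.
move=> S0; rewrite /mult2 sum_nat_const mulnC (cardD1 0%R S) unfold_in S0 add1n subn1.
by congr (_ * _); apply: eq_card => v; rewrite [LHS]unfold_in !inE.
Qed.

Lemma card_vec2 : #|{: vec2 N}| = 2 ^ N.+1.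
Proof. by rewrite card_mx card_Fp // mul1n. Qed.

Lemma card_rowspace j (A : 'M_(j, N.+1)) : row_free A -> #|in_rowspace A| = 2 ^ j.
Proof.
move=> freeA; transitivity #|image (mulmx^~ A) 'rV_j|.
  apply: eq_card => v; apply/idP/imageP => [/submxP[u ->]|[u _ ->]].
    by exists u.
  exact: submxMl.
by rewrite card_image ?card_mx ?card_Fp ?mul1n //; exact: row_free_inj.
Qed.

End Multiplicities.

Section Pencils.
Variable N : nat.
Implicit Types (K : multiset2 N) (x y : vec2 N).

Lemma exists_notin_rowspace j (A : 'M_(j, N.+1)) :
  \rank A <= N -> exists x, ~~ (x <= A)%MS.
Proof.
move=> rankA; case: (pickP [pred x : vec2 N | ~~ (x <= A)%MS]) => [x xA|allA].
  by exists x.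
have : (1%:M%R <= A)%MS by apply/row_subP => i; exact/negbFE/allA.
by move/mxrankS; rewrite mxrank1 leqNgt ltnS rankA.
Qed.

Lemma submx_col_mx_F2 j (A : 'M_(j, N.+1)) x y :
  (y <= col_mx x A)%MS = (y <= A)%MS || ((y + x)%R <= A)%MS.
Proof.
rewrite -addsmxE; apply/sub_addsmxP/orP => [[[u1 u2] /= ->]|].
  rewrite [u1]mx11_scalar mul_scalar_mx.
  case: (F2_cases (u1 ord0 ord0)) => ->; rewrite ?scale0r ?scale1r.
    by left; rewrite add0r submxMl.
  by right; rewrite addrAC addrr_rV_F2 add0r submxMl.
case=> /submxP[u yE]; first by exists (0%R, u); rewrite /= mul0mx add0r.
by exists (1%:M%R, u); rewrite /= mul1mx -yE addrCA addrr_rV_F2 addr0.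
Qed.

Lemma row_free_col_mx j (A : 'M_(j, N.+1)) x :
  row_free A -> ~~ (x <= A)%MS -> row_free (col_mx x A).
Proof.
move=> freeA xA; rewrite /row_free eqn_leq rank_leq_row /=.
rewrite -addsmxE add1n -{1}(eqP freeA); apply: rank_ltmx.
by rewrite ltmxE addsmxSr addsmx_sub submx_refl andbT.
Qed.

Lemma submx_addr_F2 j (A : 'M_(j, N.+1)) x y :
  ((y + x)%R <= A)%MS -> (x <= A)%MS = (y <= A)%MS.
Proof.
move=> yxA; apply/idP/idP => [xA|yA].
  by rewrite -[y]addr0 -(addrr_rV_F2 x) addrA addmx_sub.
by rewrite -[x]add0r -(addrr_rV_F2 y) -addrA addmx_sub.
Qed.

Lemma card_ms2_split j (A : 'M_(j, N.+1)) K :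
  card_ms2 K = mult2 K (in_rowspace A) + \sum_(y | ~~ (y <= A)%MS) K y.
Proof.
rewrite /card_ms2 /mult2 (bigID (in_rowspace A)) /=; congr (_ + _).
  by apply: eq_bigl => v; rewrite andbT.
apply: eq_bigl => v; rewrite andbT.
by have [->|] := eqVneq v 0%R; rewrite /in_rowspace ?sub0mx.
Qed.

Lemma mult2_col_mx j (A : 'M_(j, N.+1)) K x : ~~ (x <= A)%MS ->
  mult2 K (in_rowspace (col_mx x A))
  = mult2 K (in_rowspace A) + \sum_(y | ((y + x)%R <= A)%MS) K y.
Proof.
move=> xA; rewrite /mult2 (bigID (in_rowspace A)) /=; congr (_ + _).
  apply: eq_bigl => v; rewrite /in_rowspace submx_col_mx_F2.
  by case: (v <= A)%MS; rewrite ?andbT ?andbF.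
apply: eq_bigl => v; rewrite /in_rowspace submx_col_mx_F2.
case vA: (v <= A)%MS; rewrite /= ?andbF ?andbT.
  by apply/esym/negbTE; apply: contra xA => /submx_addr_F2->.
by have [vE|] := eqVneq v 0%R; rewrite //= vE add0r (negbTE xA).
Qed.

Lemma sum_cosets j (A : 'M_(j, N.+1)) K : row_free A ->
  \sum_(x | ~~ (x <= A)%MS) \sum_(y | ((y + x)%R <= A)%MS) K y
  = 2 ^ j * \sum_(y | ~~ (y <= A)%MS) K y.
Proof.
move=> freeA; rewrite (exchange_big_dep (fun y => ~~ (y <= A)%MS)) /=; last first.
  by move=> x y xA /submx_addr_F2 <-.
rewrite big_distrr /=; apply: eq_bigr => y yA; rewrite sum_nat_const.
congr (_ * _); rewrite -(card_rowspace freeA) -[RHS](card_image (addrI y)).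
apply: eq_card => x; rewrite [LHS]unfold_in; apply/andP/imageP => [[_ yxA]|[z zA ->]].
  by exists (y + x)%R; rewrite // addrA addrr_rV_F2 add0r.
rewrite addrA addrr_rV_F2 add0r; split=> //.
by apply: contra yA => /submx_addr_F2 <-.
Qed.

Lemma pencil_bound j (A : 'M_(j, N.+1)) K M : row_free A ->
  (forall x, ~~ (x <= A)%MS -> mult2 K (in_rowspace (col_mx x A)) <= M) ->
  2 ^ j * (card_ms2 K - mult2 K (in_rowspace A))
  <= (2 ^ N.+1 - 2 ^ j) * (M - mult2 K (in_rowspace A)).
Proof.
move=> freeA leM; rewrite (card_ms2_split A) addKn -sum_cosets //.
have -> : 2 ^ N.+1 - 2 ^ j = #|[pred x : vec2 N | ~~ (x <= A)%MS]|.
  by rewrite -card_vec2 -(card_rowspace freeA) -(cardC (in_rowspace A)) addKn.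
rewrite -sum_nat_const; apply: leq_sum => x xA.
have := leM x xA; rewrite mult2_col_mx // => le_sum_M.
by rewrite leq_subRL // (leq_trans (leq_addr _ _) le_sum_M).
Qed.

Lemma mult2_le_pencil j (A : 'M_(j, N.+1)) K M : \rank A <= N ->
  (forall x, ~~ (x <= A)%MS -> mult2 K (in_rowspace (col_mx x A)) <= M) ->
  mult2 K (in_rowspace A) <= M.
Proof.
move=> rankA leM; have [x xA] := exists_notin_rowspace rankA.
by apply: leq_trans (leM x xA); rewrite mult2_col_mx // leq_addr.
Qed.

Definition max_mult2 j K : nat :=
  \max_(A : 'M_(j, N.+1) | row_free A) mult2 K (in_rowspace A).

Lemma leq_max_mult2 j K (A : 'M_(j, N.+1)) :
  row_free A -> mult2 K (in_rowspace A) <= max_mult2 j K.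
Proof. exact: leq_bigmax_cond. Qed.

Lemma max_mult2_attained j K : j <= N.+1 ->
  exists2 A : 'M_(j, N.+1), row_free A & max_mult2 j K = mult2 K (in_rowspace A).
Proof.
move=> leNj; have [|A] := eq_bigmax_cond (fun A => mult2 K (in_rowspace A))
  (_ : 0 < #|[pred A : 'M_(j, N.+1) | row_free A]|).
  by apply/card_gt0P; exists (pid_mx j); rewrite inE /row_free rank_pid_mx.
by exists A.
Qed.

Lemma mult2_rowspace0 K : mult2 K (in_rowspace (0 : 'M['F_2]_(0, N.+1))%R) = 0.
Proof.
rewrite /mult2 big_pred0 // => v; have [//|/= nz_v] := eqVneq v 0%R.
by apply/negbTE; apply: contra nz_v => /mxrankS; rewrite mxrank0 leqn0 mxrank_eq0.
Qed.

(* [p] and [l] are the largest multiplicities of a point and of a line. *)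
Lemma flag_bounds K w : 2 <= N -> feasible2 2 w K ->
  exists p l, [/\ p <= l, l <= w,
    card_ms2 K <= (2 ^ N.+1 - 1) * p,
    2 * (card_ms2 K - p) <= (2 ^ N.+1 - 2) * (l - p) &
    4 * (card_ms2 K - l) <= (2 ^ N.+1 - 4) * (w - l)].
Proof.
move=> leN2 feasK; pose A0 : 'M['F_2]_(0, N.+1) := 0%R.
have free0 : row_free A0 by rewrite /row_free -leqn0 rank_leq_row.
have [A1 free1 e1] := max_mult2_attained K (isT : 1 <= N.+1).
have [A2 free2 e2] := max_mult2_attained K (ltnW leN2 : 2 <= N.+1).
have pencil0 x :
    ~~ (x <= A0)%MS -> mult2 K (in_rowspace (col_mx x A0)) <= max_mult2 1 K.
  by move=> xA0; apply/leq_max_mult2/row_free_col_mx.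
have pencil1 x :
    ~~ (x <= A1)%MS -> mult2 K (in_rowspace (col_mx x A1)) <= max_mult2 2 K.
  by move=> xA1; apply/leq_max_mult2/row_free_col_mx.
have pencil2 x : ~~ (x <= A2)%MS -> mult2 K (in_rowspace (col_mx x A2)) <= w.
  by move=> xA2; apply/feasK/eqP/row_free_col_mx.
exists (max_mult2 1 K), (max_mult2 2 K); split.
- by rewrite e1; apply: mult2_le_pencil pencil1; rewrite (eqP free1) (leq_trans _ leN2).
- by rewrite e2; apply: mult2_le_pencil pencil2; rewrite (eqP free2).
- by have := pencil_bound free0 pencil0; rewrite mult2_rowspace0 !subn0 mul1n.
- by have := pencil_bound free1 pencil1; rewrite -e1.
- by have := pencil_bound free2 pencil2; rewrite -e2.
Qed.
End Pencils.

Lemma leq_ceildivLR x b y : 0 < b -> (ceildiv x b <= y) = (x <= y * b).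
Proof. by move=> b_gt0; rewrite /ceildiv -ltnS ltn_divLR //; lia. Qed.

Lemma leq_ceildiv2r b : {homo ceildiv^~ b : x y / x <= y}.
Proof. by move=> x y le_xy; rewrite leq_div2r // leq_sub2r // leq_add2r. Qed.

Lemma ceildiv_ceildiv d a b : 0 < a -> 0 < b ->
  ceildiv (ceildiv d a) b = ceildiv d (a * b).
Proof.
move=> a_gt0 b_gt0; have ab_gt0 : 0 < a * b by rewrite muln_gt0 a_gt0.
have leE y : (ceildiv (ceildiv d a) b <= y) = (ceildiv d (a * b) <= y).
  by rewrite !leq_ceildivLR // -mulnA (mulnC b).
by apply/eqP; rewrite eqn_leq leE leqnn -leE leqnn.
Qed.

Definition griesmer3 (c : nat) : nat := c + ceildiv c 2 + ceildiv c 4.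

Lemma leq_griesmer3 : {homo griesmer3 : c c' / c <= c'}.
Proof. by move=> c c' le_cc'; rewrite !leq_add // leq_ceildiv2r. Qed.

Definition max_griesmer3 (w : nat) : nat := \max_(c < w.+1 | griesmer3 c <= w) c.

Lemma leq_max_griesmer3 w c : (c <= max_griesmer3 w) = (griesmer3 c <= w).
Proof.
apply/idP/idP => [le_c_max|le_g_w].
  apply: leq_trans (leq_griesmer3 le_c_max) _.
  apply: (big_ind (fun x => griesmer3 x <= w)) => // x y gx gy.
  by rewrite /maxn; case: ltnP.
have lt_c_w : c < w.+1.
  by rewrite ltnS (leq_trans _ le_g_w) // /griesmer3 -addnA leq_addr.
exact: (@leq_bigmax_cond _ _ _ (Ordinal lt_c_w)).
Qed.

Lemma griesmer3_decomp (c : nat) : c != 1 ->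
  exists t a b, t * 4 + a * 2 + b * 3 = c /\ t * 7 + a * 4 + b * 6 = griesmer3 c.
Proof.
have [q [s [-> lt_s4]]] : exists q s, c = 4 * q + s /\ s < 4.
  by exists (c %/ 4), (c %% 4); rewrite ltn_mod mulnC -divn_eq.
rewrite /griesmer3 /ceildiv; case: s lt_s4 => [|[|[|[|//]]]] _ c_neq1.
- by exists q, 0, 0; lia.
- by exists q.-1, 1, 1; lia.
- by exists q, 1, 0; lia.
- by exists q, 0, 1; lia.
Qed.

Lemma vq2_gt0 s : 0 < s -> 0 < vq 2 s.
Proof. by move=> s_gt0; rewrite /vq divn1 subn_gt0 -{1}(expn0 2) ltn_exp2l. Qed.

Lemma vq2_planes_gt0 N : 3 <= N -> 0 < 2 * vq 2 (N - 2).
Proof. by move=> leN3; rewrite muln_gt0 vq2_gt0 // subn_gt0. Qed.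

Lemma griesmer_g_planes N d : 3 <= N ->
  griesmer_g 2 (N - 2) N.+1 d = d + griesmer3 (ceildiv d (2 * vq 2 (N - 2))).
Proof.
move=> leN3; have v_gt0 : 0 < vq 2 (N - 2) by rewrite vq2_gt0 // subn_gt0.
rewrite /griesmer_g (_ : N.+1 - (N - 2) = 3); last lia.
rewrite big_ltn // big_ltn // big_ltn // big_geq // addn0 /griesmer3.
rewrite !ceildiv_ceildiv ?muln_gt0 ?v_gt0 //.
by rewrite expn1 !addnA; congr (_ + _ + _ + _); congr ceildiv; lia.
Qed.

Lemma expn_planes N : 2 <= N -> 2 ^ N.+1 = 4 * (2 * vq 2 (N - 2)) + 8.
Proof.
move=> leN2; rewrite /vq divn1 -[in LHS](subnK leN2) -addnS expnD.
by have := expn_gt0 2 (N - 2); lia.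
Qed.

Definition m2_planes N w : nat := w + max_griesmer3 w * (2 * vq 2 (N - 2)).

Lemma griesmer_ok_planes N w n : 3 <= N ->
  griesmer_ok 2 N 2 w n <-> w <= n <= m2_planes N w.
Proof.
move=> leN3; have u_gt0 := vq2_planes_gt0 leN3.
rewrite /griesmer_ok griesmer_g_planes //.
have excessE : w <= n ->
    (n - w + griesmer3 (ceildiv (n - w) (2 * vq 2 (N - 2))) <= n) = (n <= m2_planes N w).
  move=> le_wn; rewrite -{3}(subnK le_wn) leq_add2l -leq_max_griesmer3.
  by rewrite leq_ceildivLR // leq_subLR.
by split=> [[le_wn]|/andP[le_wn]]; rewrite excessE // le_wn.
Qed.

Lemma largest_griesmer_ok N w : 3 <= N ->
  is_largest (griesmer_ok 2 N 2 w) (m2_planes N w).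
Proof.
move=> le3N; split=> [|m /(griesmer_ok_planes _ _ le3N) /andP[] //].
by apply/(griesmer_ok_planes _ _ le3N); rewrite leq_addr leqnn.
Qed.

Lemma griesmer3_ceildiv_le d u x y z : 0 < u ->
  d <= x * u -> d <= y * (u * 2) -> d <= z * (u * 4) ->
  griesmer3 (ceildiv d u) <= x + y + z.
Proof.
move=> u_gt0 dx dy dz; rewrite /griesmer3 !ceildiv_ceildiv ?muln_gt0 ?u_gt0 //.
by rewrite !leq_add ?leq_ceildivLR ?muln_gt0 ?u_gt0.
Qed.

Lemma flag_excess_bounds u n w p l : 0 < u -> p <= l -> l <= w -> w <= n ->
  n <= (4 * u + 7) * p ->
  2 * (n - p) <= (4 * u + 6) * (l - p) ->
  4 * (n - l) <= (4 * u + 4) * (w - l) ->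
  [/\ n - w <= (w - l) * u, n - w <= (l - p) * (u * 2) & n - w <= p * (u * 4)].
Proof.
move=> u_gt0 le_pl le_lw le_wn hp hl hw.
move: (n - w) (w - l) (l - p) (subnKC le_wn) (subnKC le_lw) (subnKC le_pl) => d a b nE wE lE.
subst n w l.
have da : d <= a * u by nia.
have db : d <= b * (u * 2).
  by rewrite -(leq_pmul2l (_ : 0 < u + 1)) ?addn1 //; nia.
have dp : d <= p * (u * 4).
  by rewrite -(leq_pmul2l (_ : 0 < 2 * u + 3)) ?addn3 //; nia.
by [].
Qed.

Lemma card_le_m2_planes N w (K : multiset2 N) : 3 <= N -> feasible2 2 w K ->
  card_ms2 K <= m2_planes N w.
Proof.
move=> leN3 feasK; have u_gt0 := vq2_planes_gt0 leN3.
have [p [l [le_pl le_lw hp hl hw]]] := flag_bounds (ltnW leN3) feasK.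
have [le_nw|lt_wn] := leqP (card_ms2 K) w.
  exact: leq_trans le_nw (leq_addr _ _).
rewrite expn_planes ?(ltnW leN3) // in hp hl hw.
have [|||da db dp] := flag_excess_bounds u_gt0 le_pl le_lw (ltnW lt_wn); try lia.
rewrite -leq_subLR -leq_ceildivLR // leq_max_griesmer3.
by apply: leq_trans (griesmer3_ceildiv_le u_gt0 da db dp) _; lia.
Qed.

Section Construction.
Variable n : nat.
Local Notation V := (vec2 n.+1).

Definition coord0 (v : V) : 'F_2 := v ord0 ord0.
Definition coord1 (v : V) : 'F_2 := v ord0 (lift ord0 ord0).

Definition off_hyperplane (v : V) : bool := coord0 v != 0%R.
Definition off_codim2 (v : V) : bool := (coord0 v != 0%R) || (coord1 v != 0%R).

Lemma coord0D : {morph coord0 : x y / x + y}%R.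
Proof. by move=> x y; rewrite /coord0 mxE. Qed.

Lemma coord1D : {morph coord1 : x y / x + y}%R.
Proof. by move=> x y; rewrite /coord1 mxE. Qed.

Section OffSubspace.
Variable D : pred V.
Hypothesis D_add : forall x y, D x -> D y -> D (x + y)%R.

Lemma card_off_hyperplane :
  #|[pred v | D v && off_hyperplane v]| = #|D| - #|F2_kernel D coord0|.
Proof.
rewrite -(cardID off_hyperplane D) [#|[predD _ & _]|](eq_card (B := F2_kernel D coord0)).
  by rewrite addnK; apply: eq_card => v; rewrite !inE andbC.
by move=> v; rewrite !inE /off_hyperplane negbK andbC.
Qed.

Lemma card_off_codim2 :
  #|[pred v | D v && off_codim2 v]| = #|D| - #|F2_kernel (F2_kernel D coord0) coord1|.
Proof.
rewrite -(cardID off_codim2 D)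
  [#|[predD _ & _]|](eq_card (B := F2_kernel (F2_kernel D coord0) coord1)).
  by rewrite addnK; apply: eq_card => v; rewrite !inE andbC.
by move=> v; rewrite !inE /off_codim2 negb_or !negbK andbC andbA.
Qed.

Lemma card_off_hyperplane_le : 2 * #|[pred v | D v && off_hyperplane v]| <= #|D|.
Proof.
have : #|D| <= 2 * #|F2_kernel D coord0| := card_F2_kernel_ge D_add coord0D.
by rewrite card_off_hyperplane; lia.
Qed.

Lemma card_off_codim2_le : 4 * #|[pred v | D v && off_codim2 v]| <= 3 * #|D|.
Proof.
have : #|D| <= 2 * #|F2_kernel D coord0| := card_F2_kernel_ge D_add coord0D.
have : #|F2_kernel D coord0| <= 2 * #|F2_kernel (F2_kernel D coord0) coord1|.
  exact: card_F2_kernel_ge (F2_kernel_add D_add coord0D) coord1D.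
by rewrite card_off_codim2; lia.
Qed.
End OffSubspace.

Definition e0 : V := delta_mx ord0 ord0.

Lemma card_kernel_coord0 : 2 * #|F2_kernel predT coord0| = 2 ^ n.+2.
Proof.
rewrite -card_vec2; apply: (card_F2_kernel (fun _ _ _ _ => isT) coord0D (a := e0)) => //.
by rewrite /coord0 mxE.
Qed.

Lemma card_kernel_coord01 :
  4 * #|F2_kernel (F2_kernel predT coord0) coord1| = 2 ^ n.+2.
Proof.
rewrite -card_kernel_coord0 -[4]/(2 * 2) -mulnA; congr (2 * _).
apply: (card_F2_kernel (F2_kernel_add _ coord0D) coord1D
  (a := delta_mx ord0 (lift ord0 ord0))) => //.
  by rewrite /F2_kernel /= /coord0 mxE.
by rewrite /coord1 mxE !eqxx.
Qed.

Lemma card_off_hyperplane_all : #|off_hyperplane| = 2 ^ n.+1.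
Proof.
have : #|off_hyperplane| = 2 ^ n.+2 - #|F2_kernel predT coord0|.
  by rewrite -card_vec2 -card_off_hyperplane; apply: eq_card.
by have := card_kernel_coord0; rewrite expnS; lia.
Qed.

Lemma card_off_codim2_all : #|off_codim2| = 3 * 2 ^ n.
Proof.
have : #|off_codim2| = 2 ^ n.+2 - #|F2_kernel (F2_kernel predT coord0) coord1|.
  by rewrite -card_vec2 -card_off_codim2; apply: eq_card.
by have := card_kernel_coord01; rewrite !expnS; lia.
Qed.

Definition griesmer_multiset (t a b m : nat) : multiset2 n.+1 :=
  fun v => t + a * off_hyperplane v + b * off_codim2 v + m * (v == e0).

Lemma mult2_griesmer_multiset t a b m (S : pred V) : S 0%R ->
  mult2 (griesmer_multiset t a b m) S
  = t * (#|S| - 1) + a * #|[pred v | S v && off_hyperplane v]|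
    + b * #|[pred v | S v && off_codim2 v]| + m * #|[pred v | S v && (v == e0)]|.
Proof.
have coord0_0 : coord0 0%R = 0%R by rewrite /coord0 mxE.
move=> S0; rewrite /griesmer_multiset !mult2D !mult2M mult2_cst // !mult2_indicator //.
- apply/negbTE; apply: contraNneq (oner_neq0 'F_2) => e0E.
  by rewrite -coord0_0 e0E /coord0 mxE.
- by rewrite /off_codim2 coord0_0 /coord1 mxE eqxx.
- by rewrite /off_hyperplane coord0_0 eqxx.
Qed.

Lemma card_griesmer_multiset t a b m :
  card_ms2 (griesmer_multiset t a b m)
  = t * (2 ^ n.+2 - 1) + a * 2 ^ n.+1 + b * (3 * 2 ^ n) + m.
Proof.
rewrite /card_ms2 mult2_griesmer_multiset // -card_vec2.
have card_e0 : #|[pred v : V | predT v && (v == e0)]| = 1.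
  by rewrite (@eq_card1 _ e0) // => v; rewrite !inE.
rewrite -card_off_hyperplane_all -card_off_codim2_all card_e0 muln1.
by congr (_ + _ + _); congr (_ * _); apply: eq_card.
Qed.

Lemma feasible_griesmer_multiset t a b m :
  feasible2 2 (t * 7 + a * 4 + b * 6 + m) (griesmer_multiset t a b m).
Proof.
move=> S rankS; have freeS : row_free S by rewrite /row_free rankS.
have S_add x y : in_rowspace S x -> in_rowspace S y -> in_rowspace S (x + y)%R.
  exact: addmx_sub.
rewrite (_ : in_sub S = in_rowspace S) // mult2_griesmer_multiset.
rewrite (card_rowspace freeS) -[m in X in _ <= X]muln1 !leq_add ?leq_mul //.
- by have := card_off_hyperplane_le S_add; rewrite card_rowspace //; lia.
- by have := card_off_codim2_le S_add; rewrite card_rowspace //; lia.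
- apply: leq_trans (_ : _ <= #|pred1 e0|) (eq_leq (card1 e0)).
  by apply: subset_leq_card; apply/subsetP => v; rewrite !inE => /andP[].
- exact: sub0mx.
Qed.
End Construction.

Lemma m2_planes_attained N w : 3 <= N -> 4 <= w ->
  exists K : multiset2 N, feasible2 2 w K /\ card_ms2 K = m2_planes N w.
Proof.
case: N => // n le3n le4w; set c := max_griesmer3 w.
have le2c : 2 <= c by rewrite leq_max_griesmer3.
have c_neq1 : c != 1 by rewrite neq_ltn le2c orbT.
have [t [a [b [cE gE]]]] := griesmer3_decomp c_neq1.
have le_gw : griesmer3 c <= w by rewrite -leq_max_griesmer3.
exists (griesmer_multiset t a b (w - griesmer3 c)); split.
  by rewrite -{1}(subnKC le_gw) -gE; apply: feasible_griesmer_multiset.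
have pow_n : 2 ^ n = 2 * vq 2 (n.+1 - 2) + 2.
  by have := expn_planes (ltnW le3n); rewrite !expnS; lia.
rewrite -gE in le_gw; rewrite card_griesmer_multiset /m2_planes -/c -{}gE -{}cE.
rewrite !expnS {}pow_n; move: (2 * vq 2 (n.+1 - 2)) => u; lia.
Qed.

Lemma is_m2_planes N w : 3 <= N -> 4 <= w -> is_m2 N 2 w (m2_planes N w).
Proof.
move=> le3N le4w; split; first exact: m2_planes_attained.
by move=> _ [K [feasK <-]]; exact: card_le_m2_planes.
Qed.

Theorem mainTheorem6 (k w : nat) : 4 <= k -> 4 <= w ->
  exists n : nat, is_m2 (k - 1) 2 w n /\ is_largest (griesmer_ok 2 (k - 1) 2 w) n.
Proof.
move=> le4k le4w; have le3N : 3 <= k - 1 by lia.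
exists (m2_planes (k - 1) w); split.
  exact: is_m2_planes.
exact: largest_griesmer_ok.
Qed.
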